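(* An effect algebra $A$ is (the effect algebra of) a Boolean algebra if and only if the category $\int R(A)$ is filtered.
   Context: An effect algebra is a partial algebra $(A;+,0,1)$, with a binary partial operation $+$ and constants $0,1$, satisfying: (E1) if $a+b$ is defined, then $b+a$ is defined and $a+b=b+a$; (E2) if $a+b$ and $(a+b)+c$ are defined, then $b+c$ and $a+(b+c)$ are defined and $(a+b)+c=a+(b+c)$; (E3) for every $a$ there is a unique $a^\perp$ such that $a+a^\perp=1$; (E4) if $a+1$ is defined, then $a=0$. One-element effect algebras are allowed. Morphisms of effect algebras preserve $1$ and defined sums. Every Boolean algebra is an effect algebra via: $x+y$ is defined iff $x\wedge y=0$, and then $x+y=x\vee y$. ''$A$ is a Boolean algebra'' means $A$ arises this way from a Boolean algebra. For $[n]=\{1,\dots,n\}$, $\mathbf{FinBool}$ is the full subcategory of Boolean algebras on the objects $2^{[n]}$, $n\in\mathbb N$. The category $\int R(A)$ has: - objects: pairs $(2^{[n]},g)$ with $g\colon 2^{[n]}\to A$ an effect-algebra morphism; - arrows $(2^{[n]},g)\to(2^{[n']},g')$: Boolean algebra morphisms $f\colon 2^{[n]}\to 2^{[n']}$ with $g'\circ f=g$. A category is filtered if it satisfies all three of: - it is nonempty; - every two objects admit a cospan $X_1\to X\leftarrow X_2$; - every parallel pair $f_1,f_2\colon X\to Y$ admits $q\colon Y\to Z$ with $q\circ f_1=q\circ f_2$. *)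

(* finite Boolean algebras 2^[n] are rendered as {set 'I_n}. *)
From mathcomp Require Import all_boot.
Set Implicit Arguments.
Unset Strict Implicit.
Unset Printing Implicit Defensive.

(* Effect algebras: partial sum encoded as an option-valued operation;
   [ea_sum a b = Some c] means "a+b is defined and equals c". *)
Record EffectAlgebra := {
  ea_carrier :> Type;
  ea_sum : ea_carrier -> ea_carrier -> option ea_carrier;
  ea_zero : ea_carrier;
  ea_one : ea_carrier;
  ea_comm : forall a b c, ea_sum a b = Some c -> ea_sum b a = Some c;
  ea_assoc : forall a b c ab abc, ea_sum a b = Some ab -> ea_sum ab c = Some abc ->
     exists bc, ea_sum b c = Some bc /\ ea_sum a bc = Some abc;
  ea_orthosupp : forall a, exists! b, ea_sum a b = Some ea_one;
  ea_zeroone : forall a c, ea_sum a ea_one = Some c -> a = ea_zero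
}.

Definition is_boolean_algebra (T : Type) (meet join : T -> T -> T) (compl : T -> T)
    (bot top : T) : Prop :=
  (forall x y, meet x y = meet y x) /\
  (forall x y, join x y = join y x) /\
  (forall x y z, meet x (meet y z) = meet (meet x y) z) /\
  (forall x y z, join x (join y z) = join (join x y) z) /\
  (forall x y, meet x (join x y) = x) /\
  (forall x y, join x (meet x y) = x) /\
  (forall x y z, meet x (join y z) = join (meet x y) (meet x z)) /\
  (forall x, join x bot = x) /\
  (forall x, meet x top = x) /\
  (forall x, meet x (compl x) = bot) /\
  (forall x, join x (compl x) = top).

Definition is_Boolean (A : EffectAlgebra) : Prop :=
  exists (meet join : A -> A -> A) (compl : A -> A),
    is_boolean_algebra meet join compl (ea_zero A) (ea_one A) /\
    (forall x y z, ea_sum x y = Some z <-> (meet x y = ea_zero A /\ z = join x y)).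

Definition ea_morph (A : EffectAlgebra) (n : nat) (g : {set 'I_n} -> A) : Prop :=
  g setT = ea_one A /\
  (forall X Y : {set 'I_n}, X :&: Y = set0 -> ea_sum (g X) (g Y) = Some (g (X :|: Y))).

Definition bool_morph (n m : nat) (f : {set 'I_n} -> {set 'I_m}) : Prop :=
  (forall X Y, f (X :&: Y) = f X :&: f Y) /\
  (forall X Y, f (X :|: Y) = f X :|: f Y) /\
  (forall X, f (~: X) = ~: f X) /\
  f set0 = set0 /\ f setT = setT.

(* Objects of the category \int R(A). *)
Record RObj (A : EffectAlgebra) := {
  ro_n : nat;
  ro_g : {set 'I_ro_n} -> A;
  ro_morph : ea_morph ro_g
}.

Definition is_arrow (A : EffectAlgebra) (X Y : RObj A)
    (f : {set 'I_(ro_n X)} -> {set 'I_(ro_n Y)}) : Prop :=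
  bool_morph f /\ (forall S, @ro_g A Y (f S) = @ro_g A X S).

Arguments is_arrow {A} X Y f.

Definition intR_filtered (A : EffectAlgebra) : Prop :=
  (exists X : RObj A, True) /\
  (forall X1 X2 : RObj A, exists (X : RObj A) f1 f2,
      is_arrow X1 X f1 /\ is_arrow X2 X f2) /\
  (forall (X Y : RObj A) f1 f2, is_arrow X Y f1 -> is_arrow X Y f2 ->
      exists (Z : RObj A) q, is_arrow Y Z q /\ (forall S, q (f1 S) = q (f2 S))).

From HB Require Import structures.
From mathcomp Require Import all_boot.
From Stdlib Require Import ClassicalEpsilon.

Set Implicit Arguments.
Unset Strict Implicit.
Unset Printing Implicit Defensive.

(* If the category is filtered, every element of A is the value of a subset of some object,
   and two subsets with the same value are identified by some arrow (coequalize the two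
   arrows from the three-atom object that pick them out).  Hence meets and joins computed on
   representing subsets do not depend on the representation, and the Boolean laws transfer
   from the algebras 2^[n].  Conversely, in a Boolean algebra an object is a partition of 1
   into disjoint atoms: two objects have the common refinement by meets of atoms, and two
   parallel arrows are coequalized by discarding the atoms on which they disagree, whose
   join is 0. *)

Section IntR.
Variable A : EffectAlgebra.
Local Notation sum := (@ea_sum A).
Local Notation zero := (ea_zero A).
Local Notation one := (ea_one A).

Definition ea_orth (x : A) : A := epsilon (inhabits x) (fun y => sum x y = Some one).

Lemma ea_orthP x : sum x (ea_orth x) = Some one.
Proof.
apply: (epsilon_spec (inhabits x) (fun y => sum x y = Some one)).
by have [y [Hy _]] := ea_orthosupp x; exists y.
Qed.

Lemma ea_orth_uniq x y : sum x y = Some one -> y = ea_orth x.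
Proof.
have [y0 [_ U]] := ea_orthosupp x => Hy.
by rewrite -(U _ Hy) (U _ (ea_orthP x)).
Qed.

Lemma ea_orthK x : ea_orth (ea_orth x) = x.
Proof. exact/esym/ea_orth_uniq/ea_comm/ea_orthP. Qed.

Lemma ea_sum1x0 : sum one zero = Some one.
Proof.
by have /ea_comm/ea_zeroone E := ea_orthP one; rewrite -E ea_orthP.
Qed.

Lemma ea_orth1 : ea_orth one = zero.
Proof. by rewrite -(ea_orth_uniq ea_sum1x0). Qed.

Lemma ea_sumx0 x : sum x zero = Some x.
Proof.
have [y [Hy Hxy]] := ea_assoc (ea_comm (ea_orthP x)) ea_sum1x0.
by rewrite Hy (ea_orth_uniq (ea_comm (ea_orthP x))) -(ea_orth_uniq Hxy).
Qed.

Lemma ea_sum0x x : sum zero x = Some x.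
Proof. exact/ea_comm/ea_sumx0. Qed.

Lemma ea_sum_orth a b c : sum a b = Some c -> sum b (ea_orth c) = Some (ea_orth a).
Proof.
move=> Hab; have [d [Hd Had]] := ea_assoc Hab (ea_orthP c).
by rewrite Hd (ea_orth_uniq Had).
Qed.

Lemma ea_morph0 n (g : {set 'I_n} -> A) : ea_morph g -> g set0 = zero.
Proof. by case=> g1 gD; have := gD set0 setT (set0I _); rewrite set0U g1 => /ea_zeroone. Qed.

Lemma ea_morphC n (g : {set 'I_n} -> A) X : ea_morph g -> sum (g X) (g (~: X)) = Some one.
Proof. by case=> g1 gD; rewrite gD ?setICr // setUCr g1. Qed.

Lemma ea_morph_orth n (g : {set 'I_n} -> A) X : ea_morph g -> g (~: X) = ea_orth (g X).
Proof. by move/(ea_morphC X)/ea_orth_uniq. Qed.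

Lemma preim_bool_morph n m (phi : 'I_m -> 'I_n) : bool_morph (fun P => [set j | phi j \in P]).
Proof. by split; [|split; [|split; [|split]]] => *; apply/setP=> j; rewrite !inE. Qed.

Lemma arrow_ro_g (X Y : RObj A) f S : is_arrow X Y f -> ro_g (f S) = ro_g S.
Proof. by case=> _ ->. Qed.

Lemma comp_arrow (X Y Z : RObj A) f h :
  is_arrow X Y f -> is_arrow Y Z h -> is_arrow X Z (h \o f).
Proof.
move=> [[fI [fU [fC [f0 f1]]]] fg] [[hI [hU [hC [h0 h1]]]] hg]; split=> [|S /=].
  by split; [|split; [|split; [|split]]] => * /=; rewrite ?fI ?fU ?fC ?f0 ?f1 ?hI ?hU ?hC ?h0 ?h1.
by rewrite hg fg.
Qed.

Definition ord_one : 'I_3 := Ordinal (isT : 1 < 3).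

Section SumObject.
Variables (a b c : A).
Hypothesis sum_ab : sum a b = Some c.

Definition sum_obj_val (P : {set 'I_3}) : A :=
  match ord0 \in P, ord_one \in P, ord_max \in P with
  | false, false, false => zero
  | true, false, false => a
  | false, true, false => b
  | false, false, true => ea_orth c
  | true, true, false => c
  | true, false, true => ea_orth b
  | false, true, true => ea_orth a
  | true, true, true => one
  end.

Lemma sum_obj_morph : ea_morph sum_obj_val.
Proof.
split; first by rewrite /sum_obj_val !inE.
have sum_ca := ea_orthP c.
have sum_bc' := ea_sum_orth sum_ab.
have sum_ac' := ea_sum_orth (ea_comm sum_ab).
have sum_aa' := ea_orthP a; have sum_bb' := ea_orthP b.
move=> X Y XY0; rewrite /sum_obj_val !in_setU.
have disj i : ~~ ((i \in X) && (i \in Y)) by rewrite -in_setI XY0 inE.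
move: (disj ord0) (disj (ord_one)) (disj ord_max).
case: (ord0 \in X); case: (ord0 \in Y); case: (ord_one \in X); case: (ord_one \in Y);
  case: (ord_max \in X); case: (ord_max \in Y) => //= _ _ _;
  solve [exact: ea_sumx0 | exact: ea_sum0x | assumption | exact: ea_comm].
Qed.

Definition sum_obj : RObj A := Build_RObj sum_obj_morph.

Lemma ro_g_sum : exists (W : RObj A) (U V : {set 'I_(ro_n W)}),
  [/\ U :&: V = set0, a = ro_g U, b = ro_g V & c = ro_g (U :|: V)].
Proof.
exists sum_obj, [set ord0], [set ord_one]; rewrite /= /sum_obj_val !inE; split=> //.
by apply/setP=> i; rewrite !inE; case: eqP => // ->.
Qed.

End SumObject.

Definition split_set n (S : {set 'I_n}) (P : {set 'I_3}) : {set 'I_n} :=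
  [set j | (if j \in S then ord0 else ord_one) \in P].

Lemma split_set_atom n (S : {set 'I_n}) : split_set S [set ord0] = S.
Proof. by apply/setP=> j; rewrite !inE; case: (j \in S). Qed.

Lemma split_arrow (W : RObj A) (S : {set 'I_(ro_n W)}) a b (sum_ab : sum a b = Some one) :
  ro_g S = a -> ro_g (~: S) = b -> is_arrow (sum_obj sum_ab) W (split_set S).
Proof.
move=> gS gSc; split=> [|P]; first exact: preim_bool_morph.
have -> : split_set S P =
    (if ord0 \in P then S else set0) :|: (if ord_one \in P then ~: S else set0).
  apply/setP=> j; rewrite inE in_setU.
  by case Sj: (j \in S); case: (ord0 \in P); case: (ord_one \in P); rewrite !inE ?Sj.
have b_orth : b = ea_orth a := ea_orth_uniq sum_ab.
have [g1 _] := ro_morph W.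
rewrite /= /sum_obj_val.
case: (ord0 \in P); case: (ord_one \in P); case: (ord_max \in P);
  by rewrite ?setUCr ?setU0 ?set0U ?gS ?gSc ?b_orth ?ea_orthK ?ea_orth1 ?(ea_morph0 (ro_morph W)).
Qed.

Lemma ro_g_surj x : exists (W : RObj A) (U : {set 'I_(ro_n W)}), ro_g U = x.
Proof. by have [W [U [_ [_ -> _ _]]]] := ro_g_sum (ea_sumx0 x); exists W, U. Qed.

Section Filtered.
Hypothesis filteredA : intR_filtered A.

Lemma ro_g_coequalize (W : RObj A) (S T : {set 'I_(ro_n W)}) :
  ro_g S = ro_g T -> exists (Z : RObj A) q, is_arrow W Z q /\ q S = q T.
Proof.
move=> gST; have sum_S := ea_morphC S (ro_morph W).
have gTc : ro_g (~: T) = ro_g (~: S) by rewrite !(ea_morph_orth _ (ro_morph W)) gST.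
have [_ [_ coeq]] := filteredA.
have [Z [q [qW qST]]] :=
  coeq _ _ _ _ (split_arrow sum_S erefl erefl) (split_arrow sum_S (esym gST) gTc).
by exists Z, q; split=> //; rewrite -(split_set_atom S) -(split_set_atom T).
Qed.

Lemma ro_g_surj3 x y z : exists (W : RObj A) (U V T : {set 'I_(ro_n W)}),
  [/\ x = ro_g U, y = ro_g V & z = ro_g T].
Proof.
have [_ [cosp _]] := filteredA.
have [[X [U <-]] [Y [V <-]]] := (ro_g_surj x, ro_g_surj y); have [Z [T <-]] := ro_g_surj z.
have [W [f [h [fX hY]]]] := cosp X Y; have [W' [f' [h' [f'W h'Z]]]] := cosp W Z.
by exists W', (f' (f U)), (f' (h V)), (h' T); rewrite !arrow_ro_g.
Qed.

Definition natural_setop (op : forall n, {set 'I_n} -> {set 'I_n} -> {set 'I_n}) :=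
  forall n m (f : {set 'I_n} -> {set 'I_m}), bool_morph f ->
    forall X Y, f (op n X Y) = op m (f X) (f Y).

Variable op : forall n, {set 'I_n} -> {set 'I_n} -> {set 'I_n}.
Hypothesis op_natural : natural_setop op.

Lemma ro_g_setop_congr (X Y : RObj A) (U1 V1 : {set 'I_(ro_n X)}) (U2 V2 : {set 'I_(ro_n Y)}) :
  ro_g U1 = ro_g U2 -> ro_g V1 = ro_g V2 -> ro_g (op U1 V1) = ro_g (op U2 V2).
Proof.
move=> gU gV; have [_ [cosp _]] := filteredA.
have [W [f1 [f2 [f1X f2Y]]]] := cosp X Y.
have [Z [q [qW qU]]] : exists (Z : RObj A) q, is_arrow W Z q /\ q (f1 U1) = q (f2 U2).
  by apply: ro_g_coequalize; rewrite !arrow_ro_g.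
have [Z' [q' [q'Z q'V]]] :
    exists (Z' : RObj A) q', is_arrow Z Z' q' /\ q' (q (f1 V1)) = q' (q (f2 V2)).
  by apply: ro_g_coequalize; rewrite !arrow_ro_g.
have h1X := comp_arrow (comp_arrow f1X qW) q'Z.
have h2Y := comp_arrow (comp_arrow f2Y qW) q'Z.
rewrite -(arrow_ro_g _ h1X) -(arrow_ro_g _ h2Y).
by rewrite (op_natural h1X.1) (op_natural h2Y.1) /= qU q'V.
Qed.

Definition ea_setop (x y : A) : A :=
  epsilon (inhabits x) (fun z => forall (W : RObj A) (U V : {set 'I_(ro_n W)}),
    ro_g U = x -> ro_g V = y -> ro_g (op U V) = z).

Lemma ea_setopE (W : RObj A) (U V : {set 'I_(ro_n W)}) :
  ea_setop (ro_g U) (ro_g V) = ro_g (op U V).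
Proof.
pose P z := forall (W' : RObj A) (U' V' : {set 'I_(ro_n W')}),
  ro_g U' = ro_g U -> ro_g V' = ro_g V -> ro_g (op U' V') = z.
have : P (ea_setop (ro_g U) (ro_g V)).
  apply: (epsilon_spec _ P); exists (ro_g (op U V)) => W' U' V' gU gV.
  exact: ro_g_setop_congr.
by move/(_ W U V erefl erefl).
Qed.

End Filtered.

End IntR.

Definition ea_meet (A : EffectAlgebra) : A -> A -> A := ea_setop (fun n => @setI 'I_n).
Definition ea_join (A : EffectAlgebra) : A -> A -> A := ea_setop (fun n => @setU 'I_n).

Lemma setI_natural : natural_setop (fun n => @setI 'I_n).
Proof. by move=> n m f [fI _]. Qed.

Lemma setU_natural : natural_setop (fun n => @setU 'I_n).
Proof. by move=> n m f [_ [fU _]]. Qed.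

Section FilteredBoolean.
Variable A : EffectAlgebra.
Hypothesis filteredA : intR_filtered A.
Local Notation zero := (ea_zero A).
Local Notation one := (ea_one A).

Lemma ea_meetE (W : RObj A) (U V : {set 'I_(ro_n W)}) :
  ea_meet (ro_g U) (ro_g V) = ro_g (U :&: V).
Proof. exact: (ea_setopE filteredA setI_natural U V). Qed.

Lemma ea_joinE (W : RObj A) (U V : {set 'I_(ro_n W)}) :
  ea_join (ro_g U) (ro_g V) = ro_g (U :|: V).
Proof. exact: (ea_setopE filteredA setU_natural U V). Qed.

Lemma filtered_boolean_algebra : is_boolean_algebra (@ea_meet A) (@ea_join A) (@ea_orth A) zero one.
Proof.
have rep := ro_g_surj3 filteredA.
have orthE (W : RObj A) (U : {set 'I_(ro_n W)}) : ea_orth (ro_g U) = ro_g (~: U).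
  by rewrite (ea_morph_orth _ (ro_morph W)).
do !split.
- by move=> x y; have [W [U [V [_ [-> -> _]]]]] := rep x y x; rewrite !ea_meetE setIC.
- by move=> x y; have [W [U [V [_ [-> -> _]]]]] := rep x y x; rewrite !ea_joinE setUC.
- by move=> x y z; have [W [U [V [T [-> -> ->]]]]] := rep x y z; rewrite !ea_meetE setIA.
- by move=> x y z; have [W [U [V [T [-> -> ->]]]]] := rep x y z; rewrite !ea_joinE setUA.
- by move=> x y; have [W [U [V [_ [-> -> _]]]]] := rep x y x; rewrite ea_joinE ea_meetE setIC setUK.
- by move=> x y; have [W [U [V [_ [-> -> _]]]]] := rep x y x; rewrite ea_meetE ea_joinE setUC setIK.
- move=> x y z; have [W [U [V [T [-> -> ->]]]]] := rep x y z.
  by rewrite !ea_meetE !ea_joinE ea_meetE setIUr.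
- by move=> x; have [W [U <-]] := ro_g_surj x; rewrite -(ea_morph0 (ro_morph W)) ea_joinE setU0.
- by move=> x; have [W [U <-]] := ro_g_surj x; rewrite -(ro_morph W).1 ea_meetE setIT.
- move=> x; have [W [U <-]] := ro_g_surj x.
  by rewrite orthE -(ea_morph0 (ro_morph W)) ea_meetE setICr.
- move=> x; have [W [U <-]] := ro_g_surj x.
  by rewrite orthE -(ro_morph W).1 ea_joinE setUCr.
Qed.

Lemma filtered_sumE x y z : ea_sum x y = Some z <-> ea_meet x y = zero /\ z = ea_join x y.
Proof.
split.
  move=> /ro_g_sum [W [U [V [UV0 -> -> ->]]]].
  by rewrite ea_meetE ea_joinE UV0 (ea_morph0 (ro_morph W)).
case=> meet0 ->; move: meet0; have [W [U [V [_ [-> -> _]]]]] := ro_g_surj3 filteredA x y x.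
rewrite ea_meetE ea_joinE -(ea_morph0 (ro_morph W)).
move=> /(ro_g_coequalize filteredA) [Z [q [qW qUV]]].
have [[qI [qU [_ [q0 _]]]] _] := qW.
rewrite -(arrow_ro_g U qW) -(arrow_ro_g V qW) -(arrow_ro_g (U :|: V) qW) qU.
by apply: (ro_morph Z).2; rewrite -qI qUV q0.
Qed.

End FilteredBoolean.

Lemma filtered_Boolean (A : EffectAlgebra) : intR_filtered A -> is_Boolean A.
Proof.
move=> filteredA; exists (@ea_meet A), (@ea_join A), (@ea_orth A).
by split; [exact: filtered_boolean_algebra | exact: filtered_sumE].
Qed.

Section BooleanEffectAlgebra.
Variables (A : EffectAlgebra) (meet join : A -> A -> A) (compl : A -> A).
Local Notation bot := (ea_zero A).
Local Notation top := (ea_one A).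
Hypothesis boolA : is_boolean_algebra meet join compl bot top.
Hypothesis sumA : forall x y z, ea_sum x y = Some z <-> meet x y = bot /\ z = join x y.

Let meetC : commutative meet. Proof. by case: boolA. Qed.
Let joinC : commutative join. Proof. by case: boolA => _ []. Qed.
Let meetA : associative meet. Proof. by case: boolA => _ [_ []]. Qed.
Let joinA : associative join. Proof. by case: boolA => _ [_ [_ []]]. Qed.
Let joinKI x y : meet x (join x y) = x. Proof. by case: boolA => _ [_ [_ [_ []]]]. Qed.
Let meetKU x y : join x (meet x y) = x. Proof. by case: boolA => _ [_ [_ [_ [_ []]]]]. Qed.
Let meetUr : right_distributive meet join.
Proof. by case: boolA => _ [_ [_ [_ [_ [_ []]]]]]. Qed.
Let joinx0 : right_id bot join. Proof. by case: boolA => _ [_ [_ [_ [_ [_ [_ []]]]]]]. Qed.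
Let meetx1 : right_id top meet. Proof. by case: boolA => _ [_ [_ [_ [_ [_ [_ [_ []]]]]]]]. Qed.
Let meetxC x : meet x (compl x) = bot.
Proof. by case: boolA => _ [_ [_ [_ [_ [_ [_ [_ [_ []]]]]]]]]. Qed.

Lemma joinxx : idempotent_op join. Proof. by move=> x; rewrite -{2}(joinKI x x) meetKU. Qed.
Lemma meetxx : idempotent_op meet. Proof. by move=> x; rewrite -{2}(meetKU x x) joinKI. Qed.
Lemma join0x : left_id bot join. Proof. by move=> x; rewrite joinC joinx0. Qed.
Lemma meetx0 : right_zero bot meet. Proof. by move=> x; rewrite -(meetxC x) meetA meetxx. Qed.
Lemma meet0x : left_zero bot meet. Proof. by move=> x; rewrite meetC meetx0. Qed.
Lemma meetUl : left_distributive meet join.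
Proof. by move=> x y z; rewrite meetC meetUr !(meetC z). Qed.

HB.instance Definition _ := Monoid.isComLaw.Build A bot join joinA joinC join0x.

Lemma meetACA : interchange meet meet.
Proof. by move=> a b c d; rewrite -!meetA (meetA b) (meetC b c) -meetA. Qed.

Lemma meet_join_disjoint a b c : meet b c = bot -> meet (join a b) (join a c) = a.
Proof.
by move=> bc0; rewrite meetUl joinKI meetUr bc0 joinx0 (meetC b) meetKU.
Qed.

Lemma meet_bigl (I : Type) (r : seq I) (P : pred I) (F : I -> A) y :
  meet (\big[join/bot]_(i <- r | P i) F i) y = \big[join/bot]_(i <- r | P i) meet (F i) y.
Proof. exact: (big_endo (meet^~ y) (fun x1 x2 => meetUl x1 x2 y) (meet0x y)). Qed.

Lemma meet_bigr (I : Type) (r : seq I) (P : pred I) (F : I -> A) x :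
  meet x (\big[join/bot]_(i <- r | P i) F i) = \big[join/bot]_(i <- r | P i) meet x (F i).
Proof. exact: (big_endo (meet x) (meetUr x) (meetx0 x)). Qed.

Lemma big_meet_pair (I J : finType) (P : pred I) (Q : pred J) (a : I -> A) (b : J -> A) :
  \big[join/bot]_(x | P x.1 && Q x.2) meet (a x.1) (b x.2)
  = meet (\big[join/bot]_(i | P i) a i) (\big[join/bot]_(j | Q j) b j).
Proof.
rewrite -(pair_big P Q (fun i j => meet (a i) (b j))) meet_bigl.
by apply: eq_bigr => i _; rewrite meet_bigr.
Qed.

Section Morphism.
Variables (n : nat) (g : {set 'I_n} -> A).
Hypothesis g_morph : ea_morph g.

Lemma morph_disjoint X Y :
  X :&: Y = set0 -> meet (g X) (g Y) = bot /\ g (X :|: Y) = join (g X) (g Y).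
Proof. by move=> XY0; apply/sumA/g_morph.2. Qed.

Lemma morph_split X Y :
  meet (g (X :&: Y)) (g (X :&: ~: Y)) = bot /\ g X = join (g (X :&: Y)) (g (X :&: ~: Y)).
Proof.
rewrite -{3}(setIT X) -(setUCr Y) setIUr; apply: morph_disjoint.
by rewrite setIACA setIid setICr setI0.
Qed.

Lemma morph_setI X Y : g (X :&: Y) = meet (g X) (g Y).
Proof.
have [_ ->] := morph_split X Y; have [_ ->] := morph_split Y X.
rewrite (setIC Y X) meet_join_disjoint //; apply: (morph_disjoint _).1.
by apply/setP=> i; rewrite !inE; case: (i \in X); rewrite ?andbF.
Qed.

Lemma morph_setU X Y : g (X :|: Y) = join (g X) (g Y).
Proof.
have XY0 : X :&: (Y :&: ~: X) = set0 by rewrite setICA setICr setI0.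
have [_ ->] := morph_split Y X.
by rewrite (setIC Y X) morph_setI joinA meetKU -(morph_disjoint XY0).2 setUIr setUCr setIT.
Qed.

Lemma morph_big P : g P = \big[join/bot]_(i in P) g [set i].
Proof.
rewrite -(big_morph g morph_setU (ea_morph0 g_morph)); congr g.
by apply/setP=> i; apply/idP/bigcupP=> [Pi|[j Pj /set1P ->]] //; exists i; rewrite ?inE.
Qed.

Lemma morph_null_setI E S : g (~: E) = bot -> g (S :&: E) = g S.
Proof.
by move=> gE0; have [_ ->] := morph_split S E; rewrite (morph_setI S (~: E)) gE0 meetx0 joinx0.
Qed.

End Morphism.

Lemma atoms_morph n (w : 'I_n -> A) :
  (forall i j, i != j -> meet (w i) (w j) = bot) -> \big[join/bot]_i w i = top ->
  ea_morph (fun S => \big[join/bot]_(i in S) w i).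
Proof.
move=> w_disj w_top; split=> [|X Y XY0].
  by rewrite -w_top; apply: eq_bigl => i; rewrite inE.
apply/sumA; split; last by rewrite big_setU //; exact: joinxx.
rewrite meet_bigl big1 // => i Xi; rewrite meet_bigr big1 // => j Yj.
apply: w_disj; apply: contraTneq Yj => <-.
by apply/negP=> Yi; have := in_setI i X Y; rewrite XY0 Xi Yi inE.
Qed.

Lemma set1I_eq0 n (i j : 'I_n) : i != j -> [set i] :&: [set j] = set0.
Proof. by move=> ij; apply/eqP; rewrite setI_eq0 disjoints1 inE. Qed.

Lemma Boolean_cospan (Y1 Y2 : RObj A) :
  exists (Z : RObj A) f1 f2, is_arrow Y1 Z f1 /\ is_arrow Y2 Z f2.
Proof.
have [g1M g2M] := (ro_morph Y1, ro_morph Y2).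
pose e : 'I_#|{: 'I_(ro_n Y1) * 'I_(ro_n Y2)}| -> _ := enum_val.
pose w s := meet (ro_g [set (e s).1]) (ro_g [set (e s).2]).
have w_fibre (P : {set 'I_(ro_n Y1)}) (Q : {set 'I_(ro_n Y2)}) :
    \big[join/bot]_(s | ((e s).1 \in P) && ((e s).2 \in Q)) w s = meet (ro_g P) (ro_g Q).
  rewrite (morph_big g1M P) (morph_big g2M Q) -big_meet_pair (reindex e) //.
  by apply: onW_bij; apply: enum_val_bij.
have w_disj s t : s != t -> meet (w s) (w t) = bot.
  move=> st; rewrite /w meetACA -(morph_setI g1M) -(morph_setI g2M).
  have : e s != e t by rewrite (inj_eq enum_val_inj).
  case: (e s) (e t) => [i j] [i' j']; rewrite xpair_eqE negb_and => /orP [ne|ne].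
    by rewrite (set1I_eq0 ne) (ea_morph0 g1M) meet0x.
  by rewrite (set1I_eq0 ne) (ea_morph0 g2M) meetx0.
have w_top : \big[join/bot]_s w s = top.
  rewrite -(meetx1 top) -{1}g1M.1 -g2M.1 -w_fibre.
  by apply: eq_bigl => s; rewrite !inE.
exists (Build_RObj (atoms_morph w_disj w_top)),
  (fun P : {set _} => [set s | (e s).1 \in P]), (fun Q : {set _} => [set s | (e s).2 \in Q]).
split; split=> [|P /=]; try exact: preim_bool_morph.
  by rewrite -[RHS]meetx1 -g2M.1 -w_fibre; apply: eq_bigl => s; rewrite !inE andbT.
by rewrite -[RHS]meetx1 meetC -g1M.1 -w_fibre; apply: eq_bigl => s; rewrite !inE.
Qed.

Lemma ro_g_disagreement (X Y : RObj A) f1 f2 : is_arrow X Y f1 -> is_arrow X Y f2 ->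
  ro_g (~: [set j | [forall P, (j \in f1 P) == (j \in f2 P)]]) = bot.
Proof.
move=> f1X f2X; have gY := ro_morph Y.
have [[_ [_ [f1C _]]] _] := f1X; have [[_ [_ [f2C _]]] _] := f2X.
have -> : ~: [set j | [forall P, (j \in f1 P) == (j \in f2 P)]] =
    \bigcup_P (f1 P :&: f2 (~: P)).
  apply/setP=> j; rewrite !inE negb_forall; apply/existsP/bigcupP => [[P]|[P _]].
    case j1 : (j \in f1 P); case j2 : (j \in f2 P) => //= _.
      by exists P => //; rewrite inE j1 f2C inE j2.
    by exists (~: P) => //; rewrite inE f1C inE j1 setCK j2.
  by rewrite inE f2C inE => /andP [j1 j2]; exists P; rewrite j1 (negbTE j2).
rewrite (big_morph _ (morph_setU gY) (ea_morph0 gY)) big1 // => P _.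
rewrite (morph_setI gY) (arrow_ro_g _ f1X) (arrow_ro_g _ f2X).
exact: (morph_disjoint (ro_morph X) (setICr P)).1.
Qed.

Lemma restrict_arrow (Y : RObj A) (E : {set 'I_(ro_n Y)}) k : k \in E -> ro_g (~: E) = bot ->
  is_arrow Y Y (fun S => [set j | (if j \in E then j else k) \in S]).
Proof.
move=> Ek gE0; split=> [|S]; first exact: preim_bool_morph.
rewrite -(morph_null_setI (ro_morph Y) _ gE0) -[RHS](morph_null_setI (ro_morph Y) _ gE0).
by congr ro_g; apply/setP=> j; rewrite !inE; case: (j \in E); rewrite ?andbT ?andbF.
Qed.

Lemma trivial_coequalizer (Y : RObj A) : top = bot ->
  exists (Z : RObj A) q, is_arrow Y Z q /\ (forall S T, q S = q T).
Proof.
move=> top_bot; have all_bot x : x = bot by rewrite -(meetx1 x) top_bot meetx0.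
have top_morph : ea_morph (fun _ : {set 'I_0} => top).
  by split=> // U V _; apply/sumA; rewrite meetxx joinxx top_bot.
have sets0_eq (U V : {set 'I_0}) : U = V by apply/setP => [[]].
exists (Build_RObj top_morph), (fun _ => set0); split=> //.
split=> [|S]; last by rewrite [LHS]all_bot [RHS]all_bot.
by split; [|split; [|split; [|split]]] => *; apply: sets0_eq.
Qed.

Lemma Boolean_coequalizer (X Y : RObj A) f1 f2 : is_arrow X Y f1 -> is_arrow X Y f2 ->
  exists (Z : RObj A) q, is_arrow Y Z q /\ (forall S, q (f1 S) = q (f2 S)).
Proof.
move=> f1X f2X; have gE0 := ro_g_disagreement f1X f2X.
set E := [set j | _] in gE0.
have agree j P : j \in E -> (j \in f1 P) = (j \in f2 P) by rewrite inE => /forallP /(_ P) /eqP.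
clearbody E.
have [E0|[k Ek]] := set_0Vmem E.
  have top_bot : top = bot by rewrite -(ro_morph Y).1 -gE0 E0 setC0.
  by have [Z [q [qY qS]]] := trivial_coequalizer Y top_bot; exists Z, q.
exists Y, (fun S : {set _} => [set j | (if j \in E then j else k) \in S]).
split; first exact: restrict_arrow.
by move=> S; apply/setP=> j; rewrite !inE; apply: agree; case: ifP.
Qed.

Lemma Boolean_filtered : intR_filtered A.
Proof.
split; last by split; [exact: Boolean_cospan | exact: Boolean_coequalizer].
by have [W _] := ro_g_surj bot; exists W.
Qed.

End BooleanEffectAlgebra.

Theorem mainTheorem4 (A : EffectAlgebra) : is_Boolean A <-> intR_filtered A.
Proof.
split; last exact: filtered_Boolean.
by case=> [meet [join [compl [boolA sumA]]]]; exact: Boolean_filtered boolA sumA.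
Qed.
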